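(* Let $(\Gamma,M)$ be an E-GCM graph and let $(\Gamma',M')$ be an OA-connected component of $(\Gamma,M)$ whose nodes are indexed by $J\subseteq I_n$. The following are equivalent: (1) $(\Gamma',M')$ is unital OA-cyclic; (2) $|\{K\alpha_x:K\in\mathbb{R}\}\cap\Phi_M^+|<\infty$ for some $x\in J$; (3) $|\{K\alpha_x:K\in\mathbb{R}\}\cap\Phi_M^+|<\infty$ for all $x\in J$. Moreover, in these cases $|\{K\alpha_x:K\in\mathbb{R}\}\cap\Phi_M^+|=|\{K\alpha_y:K\in\mathbb{R}\}\cap\Phi_M^+|$ for all $x,y\in J$.
   Context: E-GCM $M=(M_{ij})_{i,j\in I_n}$: real, $M_{ii}=2$, $M_{ij}\le0$ for $i\ne j$, $M_{ij}\neq0\iff M_{ji}\ne0$, nonzero $M_{ij}M_{ji}$ either $\ge4$ or $=4\cos^2(\pi/m)$ with $m\ge3$ integer. E-GCM graph: nodes $\gamma_i$, adjacent iff $M_{ij}\ne0$. Coxeter group $W$: generators $s_i$, $s_i^2=e$, $(s_is_j)^{m_{ij}}=e$ where $m_{ij}=k$ if $M_{ij}M_{ji}=4\cos^2(\pi/k)$ ($k\ge 2$ integer), $m_{ij}=\infty$ if $M_{ij}M_{ji}\ge4$. $W$ acts on the real vector space $V$ with basis $(\alpha_i)$ by $s_i.\alpha_j=\alpha_j-M_{ij}\alpha_i$; $\Phi_M=\{w.\alpha_i\}$, $\Phi_M^+$ = roots with all coefficients $\ge0$. $\gamma_i,\gamma_j$ are odd-adjacent if $m_{ij}$ is odd; then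 $K_{ji}:=-M_{ji}/(2\cos(\pi/m_{ij}))$. An OA-path is a sequence $\mathcal P=[\gamma_{i_0},\dots,\gamma_{i_p}]$ ($p\ge 0$) with consecutive nodes odd-adjacent; $\Pi_{\mathcal P}:=K_{i_pi_{p-1}}\cdots K_{i_1i_0}$ ($=1$ for $p=0$). It is an OA-cycle if $\gamma_{i_p}=\gamma_{i_0}$. An OA-connected component is the induced subgraph (with the corresponding submatrix of $M$) on a maximal set of nodes any two of which can be joined by an OA-path. It is unital OA-cyclic if $\Pi_{\mathcal C}=1$ for every OA-cycle $\mathcal C$ in it. *)

From HB Require Import structures.
From mathcomp Require Import all_boot all_order all_algebra.
From mathcomp Require Import all_classical all_reals all_analysis.
Set Implicit Arguments. Unset Strict Implicit. Unset Printing Implicit Defensive.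
Import Order.TTheory GRing.Theory Num.Theory.
Local Open Scope ring_scope.
Local Open Scope classical_set_scope.

Section EGCM.
Variables (R : realType) (n : nat).
Implicit Types (M : 'M[R]_n) (i j x y : 'I_n).

Definition egcm M : Prop :=
  [/\ (forall i, M i i = 2),
      (forall i j, i != j -> M i j <= 0),
      (forall i j, M i j != 0 <-> M j i != 0)
    & (forall i j, M i j * M j i != 0 ->
         4 <= M i j * M j i \/
         exists m : nat, (3 <= m)%N /\ M i j * M j i = 4 * cos (pi / m%:R) ^+ 2)].

Definition coxm_pred M i j (k : nat) : Prop :=
  (2 <= k)%N /\ M i j * M j i = 4 * cos (pi / k%:R) ^+ 2.

(* m_ij; the value 0 encodes m_ij = infinity *)
Definition coxm M i j : nat :=
  match pselect (exists k, coxm_pred M i j k) with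
  | left h => projT1 (cid h)
  | right _ => 0%N
  end.

(* odd adjacency: m_ij odd (infinity, encoded 0, is not odd) *)
Definition odd_adj M i j : bool := (i != j) && odd (coxm M i j).

Definition Kc M j i : R := - M j i / (2 * cos (pi / (coxm M i j)%:R)).

(* OA-path [x; s_1; ...; s_p]; its product Pi = K_{i_p i_{p-1}} ... K_{i_1 i_0} *)
Definition oa_path M x (s : seq 'I_n) : bool := path (odd_adj M) x s.
Definition oa_prod M x (s : seq 'I_n) : R :=
  \prod_(pr <- zip (x :: s) s) Kc M pr.2 pr.1.

Definition oa_connected M x y : Prop :=
  exists s, oa_path M x s /\ last x s = y.

Definition oa_pairwise M (J : {set 'I_n}) : Prop :=
  forall x y, x \in J -> y \in J -> oa_connected M x y.
Definition oa_component M (J : {set 'I_n}) : Prop :=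
  [/\ J != finset.set0, oa_pairwise M J &
      forall J' : {set 'I_n}, J \subset J' -> oa_pairwise M J' -> J' = J].

Definition unital_oa_cyclic M (J : {set 'I_n}) : Prop :=
  forall x s, oa_path M x s -> last x s = x -> all (mem J) (x :: s) ->
    oa_prod M x s = 1.

(* simple root alpha_i and simple reflection s_i on V = R^n (row vectors):
   s_i . alpha_j = alpha_j - M_ij alpha_i, extended linearly *)
Definition alpha i : 'rV[R]_n := delta_mx 0 i.
Definition refl M i (v : 'rV[R]_n) : 'rV[R]_n :=
  v - (\sum_j v 0 j * M i j) *: alpha i.

(* Phi_M = { w . alpha_i }, w ranging over words in the generators s_i *)
Definition roots M : set 'rV[R]_n :=
  [set v | exists (w : seq 'I_n) i, v = foldr (refl M) (alpha i) w].
Definition pos_roots M : set 'rV[R]_n :=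
  [set v | roots M v /\ forall j, 0 <= v 0 j].

Definition ray_roots M x : set 'rV[R]_n :=
  [set K *: alpha x | K in [set: R]] `&` pos_roots M.

End EGCM.

(* An OA-path from y to x is realised by a word of W: when m = m_ij is odd, the
   alternating word of length m - 1 sends alpha_i to K_ji alpha_j, so a path with
   product P yields the positive root P alpha_x.  Conversely, let w alpha_y = K alpha_x
   with K > 0 and w reduced.  By positivity of roots, proved by the usual induction on
   the decomposition of w with respect to a dihedral subgroup, the last dihedral block
   of w either fixes alpha_y or, when m_yz is odd, sends it to K_zy alpha_z: a positive
   combination of alpha_y and alpha_z would make two non-parallel nonnegative roots add
   up to a multiple of alpha_x.  Hence K is the product of an OA-path from y to x.
   In a unital OA-cyclic component this product only depends on the endpoints, so the
   ray through alpha_x holds exactly one root per node of J, and rescaling by the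
   product of a path from x to x' maps the ray of x onto the ray of x'.  An OA-cycle
   with product c <> 1 at some node instead produces the infinitely many positive
   roots d c^k alpha_x. *)

From HB Require Import structures.
From mathcomp Require Import all_boot all_order all_algebra.
From mathcomp Require Import all_classical all_reals all_analysis.
From mathcomp Require Import ring lra zify.
Set Implicit Arguments. Unset Strict Implicit. Unset Printing Implicit Defensive.
Import Order.TTheory GRing.Theory Num.Theory.
Local Open Scope ring_scope.
Local Open Scope classical_set_scope.

Fixpoint altw (T : Type) (a b : T) k : seq T :=
  if k is k'.+1 then (if odd k' then a else b) :: altw a b k' else [::].

Lemma size_altw (T : Type) (a b : T) k : size (altw a b k) = k.
Proof. by elim: k => //= k ->. Qed.

Lemma altw_rcons (T : Type) (a b : T) k : altw a b k.+1 = rcons (altw b a k) b.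
Proof. by elim: k a b => //= k IH a b; rewrite IH; case: (odd k). Qed.

Lemma altw_suffix (T : Type) (a b : T) j k : exists p, altw a b (j + k) = p ++ altw a b k.
Proof.
elim: j => [|j [p IH]]; first by exists [::].
by exists ((if odd (j + k) then a else b) :: p); rewrite addSn /= IH.
Qed.

(* [cheb (M s t * M t s) j] are the coefficients of the alternating words acting
   on [alpha s] (wact_altw_alpha); for x = 4 cos^2 t, [cheb x j] is sin (j t) / sin t,
   further divided by 2 cos t when j is even (cheb_cos_sin). *)
Fixpoint cheb (R : pzRingType) (x : R) j : R :=
  if j is j1.+1 then
    if j1 is j'.+1 then (if odd j' then x else 1) * cheb x j1 - cheb x j' else 1
  else 0.
Arguments cheb : simpl never.

Lemma cheb0 (R : pzRingType) (x : R) : cheb x 0 = 0. Proof. by []. Qed.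
Lemma cheb1 (R : pzRingType) (x : R) : cheb x 1 = 1. Proof. by []. Qed.
Lemma cheb_rec (R : pzRingType) (x : R) j :
  cheb x j.+2 = (if odd j then x else 1) * cheb x j.+1 - cheb x j.
Proof. by []. Qed.

Section WordAction.
Variables (R : realType) (n : nat) (M : 'M[R]_n).
Implicit Types (i j s t : 'I_n) (u v : 'rV[R]_n) (w : seq 'I_n).
Local Notation al := (alpha R).

Definition wact (w : seq 'I_n) (v : 'rV[R]_n) : 'rV[R]_n := foldr (refl M) v w.

Definition coroot (i : 'I_n) (v : 'rV[R]_n) : R := \sum_j v 0 j * M i j.

Lemma alphaE i j : al i 0 j = (i == j)%:R.
Proof. by rewrite /alpha mxE eqxx /= eq_sym. Qed.

Lemma alpha_neq0 i : al i != 0.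
Proof. by apply/eqP => /rowP /(_ i); rewrite alphaE eqxx mxE; apply/eqP/oner_neq0. Qed.

Lemma alpha_ge0 i j : 0 <= al i 0 j.
Proof. by rewrite alphaE ler0n. Qed.

Lemma scale_alphaE (K : R) i j : (K *: al i) 0 j = K * (i == j)%:R.
Proof. by rewrite mxE alphaE. Qed.

Lemma scale_alpha_id (K : R) i : (K *: al i) 0 i = K.
Proof. by rewrite scale_alphaE eqxx mulr1. Qed.

Lemma corootD i u v : coroot i (u + v) = coroot i u + coroot i v.
Proof. by rewrite /coroot -big_split; apply: eq_bigr => j _; rewrite mxE mulrDl. Qed.

Lemma corootZ i a v : coroot i (a *: v) = a * coroot i v.
Proof. by rewrite /coroot mulr_sumr; apply: eq_bigr => j _; rewrite mxE mulrA. Qed.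

Lemma corootB i u v : coroot i (u - v) = coroot i u - coroot i v.
Proof. by rewrite corootD -scaleN1r corootZ mulN1r. Qed.

Lemma coroot_alpha i j : coroot i (al j) = M i j.
Proof.
rewrite /coroot (bigD1 j) //= alphaE eqxx mul1r big1 ?addr0 // => k /negPf kj.
by rewrite alphaE eq_sym kj mul0r.
Qed.

Lemma reflE i v : refl M i v = v - coroot i v *: al i.
Proof. by []. Qed.

Lemma reflD i u v : refl M i (u + v) = refl M i u + refl M i v.
Proof. by rewrite !reflE corootD scalerDl opprD addrACA. Qed.

Lemma reflZ i a v : refl M i (a *: v) = a *: refl M i v.
Proof. by rewrite !reflE corootZ scalerBr scalerA. Qed.

Lemma wactD w u v : wact w (u + v) = wact w u + wact w v.
Proof. by elim: w => //= i w ->; rewrite reflD. Qed.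

Lemma wactZ w a v : wact w (a *: v) = a *: wact w v.
Proof. by elim: w => //= i w ->; rewrite reflZ. Qed.

Lemma wact0 w : wact w 0 = 0.
Proof. by have := wactZ w 0 0; rewrite !scale0r. Qed.

Lemma wactB w u v : wact w (u - v) = wact w u - wact w v.
Proof. by rewrite wactD -scaleN1r wactZ scaleN1r. Qed.

Lemma wact_cons i w v : wact (i :: w) v = refl M i (wact w v).
Proof. by []. Qed.

Lemma wact_cat w1 w2 v : wact (w1 ++ w2) v = wact w1 (wact w2 v).
Proof. by rewrite /wact foldr_cat. Qed.

Lemma wact_rcons w i v : wact (rcons w i) v = wact w (refl M i v).
Proof. by rewrite -cats1 wact_cat. Qed.

Hypothesis Mdiag : forall i, M i i = 2.

Lemma refl_span2 s t p q :
  refl M s (p *: al s + q *: al t) = (- p - M s t * q) *: al s + q *: al t.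
Proof.
rewrite reflE corootD !corootZ !coroot_alpha Mdiag.
by apply/rowP => k; rewrite !mxE; ring.
Qed.

Lemma refl_alpha i : refl M i (al i) = - al i.
Proof. by rewrite reflE coroot_alpha Mdiag; apply/rowP => k; rewrite !mxE; ring. Qed.

Lemma reflK i : involutive (refl M i).
Proof.
move=> v; rewrite [in LHS]reflE reflE corootB corootZ coroot_alpha Mdiag.
by apply/rowP => k; rewrite !mxE; ring.
Qed.

Lemma wact_altw_alpha s t k (x := M s t * M t s) :
  wact (altw s t k) (al s) =
  if odd k then cheb x k *: al s + (- M t s * cheb x k.+1) *: al t
  else cheb x k.+1 *: al s + (- M t s * cheb x k) *: al t.
Proof.
elim: k => [|k IH] /=; first by rewrite cheb1 cheb0 mulr0 scale0r addr0 scale1r.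
rewrite IH cheb_rec; case: (odd k) => /=.
  by rewrite refl_span2; congr (_ *: _ + _ *: _); rewrite /x; ring.
by rewrite addrC refl_span2 addrC; congr (_ *: _ + _ *: _); rewrite /x; ring.
Qed.

Lemma wact_revK w : cancel (wact w) (wact (rev w)).
Proof. by elim: w => //= i w IH v; rewrite rev_cons wact_rcons reflK IH. Qed.

Lemma wact_inj w : injective (wact w).
Proof. exact: can_inj (wact_revK w). Qed.

Lemma wact_neq0 w v : v != 0 -> wact w v != 0.
Proof. by apply: contraNneq => /(congr1 (wact (rev w))); rewrite wact_revK wact0 => ->. Qed.

End WordAction.

Section ChebTrig.
Variable R : realType.
Implicit Types (T th x : R).

Definition chebU (T : R) j := cheb (T ^+ 2) j * (if odd j then 1 else T).

Lemma chebU0 T : chebU T 0 = 0. Proof. by rewrite /chebU cheb0 mul0r. Qed.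
Lemma chebU1 T : chebU T 1 = 1. Proof. by rewrite /chebU cheb1 mulr1. Qed.

Lemma chebU_rec T j : chebU T j.+2 = T * chebU T j.+1 - chebU T j.
Proof. by rewrite /chebU cheb_rec /=; case: (odd j) => /=; ring. Qed.

Lemma chebU_sin th j : chebU (2 * cos th) j * sin th = sin (j%:R * th).
Proof.
suff : chebU (2 * cos th) j * sin th = sin (j%:R * th) /\
       chebU (2 * cos th) j.+1 * sin th = sin (j.+1%:R * th) by case.
elim: j => [|j [IH1 IH2]]; first by rewrite chebU0 chebU1 !mul0r !mul1r sin0.
split => //; rewrite chebU_rec mulrBl -(mulrA (2 * cos th)) IH2 IH1.
have -> : j.+2%:R * th = j.+1%:R * th + th by rewrite -addn1 natrD mulrDl mul1r.
have -> : j%:R * th = j.+1%:R * th - th by rewrite -addn1 natrD mulrDl mul1r addrK.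
by rewrite sinB sinD; ring.
Qed.

Lemma cheb_cos_sin th j :
  cheb (4 * cos th ^+ 2) j * (if odd j then 1 else 2 * cos th) * sin th
  = sin (j%:R * th).
Proof. by rewrite -chebU_sin /chebU; congr (cheb _ _ * _ * _); ring. Qed.

Lemma chebU_ge1 T j : 2 <= T -> 1 <= chebU T j.+1.
Proof.
move=> T2; suff : chebU T j <= chebU T j.+1 /\ 1 <= chebU T j.+1 by case.
elim: j => [|j [IH1 IH2]]; first by rewrite chebU0 chebU1 ler01 lexx.
have : chebU T j.+1 * 2 <= chebU T j.+1 * T by rewrite ler_wpM2l // (le_trans ler01).
by rewrite chebU_rec; split; lra.
Qed.

Lemma cheb_gt0_ge4 (x : R) j : 4 <= x -> (0 < j)%N -> 0 < cheb x j.
Proof.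
move=> x4; case: j => // j _.
have x0 : 0 <= x by apply: le_trans x4; rewrite ler0n.
have sx2 : 2 <= Num.sqrt x by have := sqr_sqrtr x0; have := sqrtr_ge0 x; rewrite expr2; nra.
have := chebU_ge1 j sx2; rewrite /chebU sqr_sqrtr //.
case: (odd j.+1) => [|U1]; first by rewrite mulr1; lra.
by rewrite -(pmulr_lgt0 _ (lt_le_trans _ sx2)) ?(lt_le_trans ltr01 U1).
Qed.

Section PiOver.
Variable m : nat.
Hypothesis m3 : (3 <= m)%N.
Let th := pi / m%:R : R.

Let m_gt0 : (0 : R) < m%:R.
Proof. by rewrite ltr0n; apply: leq_trans m3. Qed.

Let th_gt0 : 0 < th.
Proof. by rewrite divr_gt0 ?pi_gt0 ?m_gt0. Qed.

Let th_lt_pihalf : th < pi / 2.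
Proof.
rewrite /th ltr_pM2l ?pi_gt0 // ltf_pV2 ?posrE //.
by rewrite ltr_nat; apply: leq_trans m3.
Qed.

Let mth : m%:R * th = pi.
Proof. by rewrite /th mulrC -mulrA mulVf ?mulr1 // gt_eqF. Qed.

Let sin_gt0 : 0 < sin th.
Proof. by apply: sin_gt0_pihalf; rewrite th_gt0 th_lt_pihalf. Qed.

Lemma cos_pi_div_gt0 : 0 < cos th.
Proof.
apply: cos_gt0_pihalf; have := pi_gt0 R; have := th_gt0.
by rewrite th_lt_pihalf andbT; lra.
Qed.

Lemma cos_pi_div_sqr_lt1 : cos th ^+ 2 < 1.
Proof. by rewrite cos2sin2 gtrBl exprn_gt0. Qed.

Let cos_factor_neq0 j : (if odd j then 1 else 2 * cos th) != 0.
Proof.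
by case: (odd j); rewrite ?oner_neq0 // mulf_neq0 ?pnatr_eq0 // gt_eqF ?cos_pi_div_gt0.
Qed.

Lemma cheb_cos_m : cheb (4 * cos th ^+ 2) m = 0.
Proof.
have := cheb_cos_sin th m; rewrite mth sinpi => /eqP.
by rewrite !mulf_eq0 (negPf (cos_factor_neq0 m)) (gt_eqF sin_gt0) !orbF => /eqP.
Qed.

Lemma cheb_cos_gt0 j : (0 < j < m)%N -> 0 < cheb (4 * cos th ^+ 2) j.
Proof.
case/andP=> j0 jm; have sj : 0 < sin (j%:R * th).
  by apply: sin_gt0_pi; rewrite mulr_gt0 ?ltr0n //= -mth ltr_pM2r // ltr_nat.
rewrite -cheb_cos_sin pmulr_lgt0 // in sj; move: sj; have := cos_pi_div_gt0.
by case: (odd j) => c0; rewrite ?mulr1 // pmulr_lgt0 // mulr_gt0.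
Qed.

Lemma cheb_cos_pred : 
  cheb (4 * cos th ^+ 2) m.-1 * (if odd m.-1 then 1 else 2 * cos th) = 1.
Proof.
have := cheb_cos_sin th m.-1.
have -> : m.-1%:R * th = pi - th.
  by rewrite -mth -{2}(ltn_predK m3) -addn1 natrD mulrDl mul1r addrK.
rewrite sinB sinpi cospi mul0r sub0r mulN1r opprK -{2}[sin th]mul1r.
by move/(mulIf (lt0r_neq0 sin_gt0)).
Qed.

End PiOver.
End ChebTrig.

Lemma odd_predn k : (0 < k)%N -> odd k.-1 = ~~ odd k.
Proof. by case: k => //= k _; rewrite negbK. Qed.

Definition lt_coxm (R : realType) n (M : 'M[R]_n) s t k :=
  (coxm M s t == 0%N) || (k < coxm M s t)%N.

Section CoxeterNumber.
Variables (R : realType) (n : nat) (M : 'M[R]_n).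
Hypothesis HM : egcm M.
Implicit Types (i j s t : 'I_n).

Lemma egcm_diag i : M i i = 2.
Proof. by case: HM. Qed.

Lemma coxm_spec i j :
  coxm_pred M i j (coxm M i j) \/ (coxm M i j = 0%N /\ ~ exists k, coxm_pred M i j k).
Proof. by rewrite /coxm; case: pselect => [h|h]; [left; case: cid | right]. Qed.

Lemma coxm_cases i j : i != j ->
  [\/ [/\ coxm M i j = 0%N, 4 <= M i j * M j i, M i j < 0 & M j i < 0],
      [/\ coxm M i j = 2%N, M i j = 0 & M j i = 0] |
      [/\ (3 <= coxm M i j)%N, M i j * M j i = 4 * cos (pi / (coxm M i j)%:R) ^+ 2,
          M i j < 0 & M j i < 0]].
Proof.
move=> ij; case: HM => _ Mneg Msym Mprod.
have neg_of_prod : M i j * M j i != 0 -> M i j < 0 /\ M j i < 0.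
  rewrite mulf_eq0 negb_or => /andP[a0 b0].
  by rewrite !lt_neqAle a0 b0 !Mneg // eq_sym.
case: (coxm_spec i j) => [[]|[c0 nk]].
  rewrite leq_eqVlt => /orP[/eqP <-|c3] cp.
    have sym0 a b : M a b = 0 -> M b a = 0.
      by move=> ab; apply/eqP/negPn/negP => /Msym; rewrite ab eqxx.
    move/eqP: cp; rewrite cos_pihalf expr0n mulr0 mulf_eq0 => /orP[]/eqP h.
      by constructor 2; rewrite h sym0.
    by constructor 2; rewrite h sym0.
  have p0 : M i j * M j i != 0.
    by rewrite cp mulf_neq0 // expf_neq0 // lt0r_neq0 // cos_pi_div_gt0.
  by have [] := neg_of_prod p0; constructor 3.
have p0 : M i j * M j i != 0.
  apply/eqP => p0; apply: nk; exists 2%N.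
  by rewrite /coxm_pred p0 cos_pihalf expr0n mulr0.
have [p4|[k [k3 pk]]] := Mprod _ _ p0.
  by have [] := neg_of_prod p0; constructor 1.
by case: nk; exists k; split => //; apply: ltnW.
Qed.

Lemma Kc_gt0 i j : odd_adj M i j -> 0 < Kc M j i.
Proof.
case/andP=> ij; case: (coxm_cases ij) => [[->]|[->]|[c3 _ _ Mji]] //= _.
by rewrite divr_gt0 ?oppr_gt0 // mulr_gt0 ?cos_pi_div_gt0.
Qed.

Section Dihedral.
Variables s t : 'I_n.
Hypothesis st : s != t.
Local Notation m := (coxm M s t).
Local Notation x := (M s t * M t s).

Lemma odd_coxm_ge3 : odd m -> (3 <= m)%N.
Proof. by case: (coxm_cases st) => [[->]|[->]|[]]. Qed.

Lemma cheb_gt0 (j : nat) : (0 < j)%N -> lt_coxm M s t j -> 0 < cheb x j.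
Proof.
move=> j0; rewrite /lt_coxm.
case: (coxm_cases st) => [[c0 x4 _ _]|[c2 _ _]|[c3 xc _ _]].
- by move=> _; apply: cheb_gt0_ge4.
- by rewrite c2; case: j j0 => [|[|j]] // _ _; rewrite cheb1.
- rewrite (gtn_eqF (ltnW (ltnW c3))) /= xc => jm.
  by apply: (@cheb_cos_gt0 R _ c3); rewrite j0.
Qed.

Lemma Mts_lt0 : m != 2%N -> M t s < 0.
Proof. by case: (coxm_cases st) => [[]|[->]|[]]. Qed.

Lemma cheb_coxm_annih : (2 <= m)%N -> M s t * cheb x m = 0 /\ M t s * cheb x m = 0.
Proof.
case: (coxm_cases st) => [[->]|[c2 -> ->]|[c3 xc _ _]] //; first by rewrite !mul0r.
by rewrite xc cheb_cos_m // !mulr0.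
Qed.

Lemma cheb_coxm_odd : odd m -> cheb x m = 0.
Proof.
move=> /odd_coxm_ge3; case: (coxm_cases st) => [[->]|[->]|[_ xc _ _ m3]] //.
by rewrite xc cheb_cos_m.
Qed.

Lemma cheb_coxm_pred_even : (2 <= m)%N -> ~~ odd m -> cheb x m.-1 = 1.
Proof.
case: (coxm_cases st) => [[->]|[-> _ _]|[c3 xc _ _]] //.
move=> _ em; have := @cheb_cos_pred R _ c3.
by rewrite (odd_predn (ltnW (ltnW c3))) em mulr1 -xc.
Qed.

Lemma cheb_coxm_pred_odd : odd m -> - M t s * cheb x m.-1 = Kc M t s.
Proof.
move=> om; move: (odd_coxm_ge3 om).
case: (coxm_cases st) => [[->]|[->]|[_ xc _ _ m3]] //.
have := @cheb_cos_pred R _ m3; rewrite (odd_predn (ltnW (ltnW m3))) om -xc /=.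
have c0 : 2 * cos (pi / m%:R) != 0 :> R.
  by rewrite mulf_neq0 ?pnatr_eq0 // lt0r_neq0 // cos_pi_div_gt0.
by move/(canRL (mulfK c0)); rewrite mul1r /Kc => ->.
Qed.

Lemma coxm_prod_neq4 : (2 <= m)%N -> x != 4.
Proof.
case: (coxm_cases st) => [[->]|[_ -> _]|[c3 xc _ _]] //.
  by rewrite mul0r eq_sym pnatr_eq0.
move=> _; rewrite xc; have := @cos_pi_div_sqr_lt1 R _ c3.
by move=> c1; apply/eqP => e; lra.
Qed.

End Dihedral.
End CoxeterNumber.

Definition dword n (s t : 'I_n) (u : seq 'I_n) := all (mem [:: s; t]) u.

Lemma dword_cons n (s t i : 'I_n) u : dword s t (i :: u) = (i \in [:: s; t]) && dword s t u.
Proof. by []. Qed.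

Lemma dword_cat n (s t : 'I_n) u1 u2 : dword s t (u1 ++ u2) = dword s t u1 && dword s t u2.
Proof. exact: all_cat. Qed.

Lemma dword_altw n (s t : 'I_n) k : dword s t (altw s t k) /\ dword s t (altw t s k).
Proof.
rewrite /dword; elim: k => //= k [-> ->].
by case: (odd k); rewrite !inE !eqxx ?orbT.
Qed.

Section Braid.
Variables (R : realType) (n : nat) (M : 'M[R]_n).
Hypothesis HM : egcm M.
Implicit Types (i s t : 'I_n) (u : seq 'I_n) (v : 'rV[R]_n).
Local Notation al := (alpha R).
Local Notation wact := (wact M).
Let Mdiag := egcm_diag HM.

Lemma dword_actE s t u : dword s t u -> exists c11 c12 c21 c22 : R, forall v,
  wact u v = v - (c11 * coroot M s v + c12 * coroot M t v) *: al s
               - (c21 * coroot M s v + c22 * coroot M t v) *: al t.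
Proof.
elim: u => [_|i u IH /andP[hi /IH [c11 [c12 [c21 [c22 E]]]]]].
  by exists 0, 0, 0, 0 => v; rewrite !mul0r !addr0 !scale0r !subr0.
have corootE j v : coroot M j (wact u v) = coroot M j v
    - (c11 * coroot M s v + c12 * coroot M t v) * M j s
    - (c21 * coroot M s v + c22 * coroot M t v) * M j t.
  by rewrite E !corootB !corootZ !coroot_alpha.
move: hi; rewrite !inE => /orP[]/eqP ->.
  exists (c11 + (1 - c11 * M s s - c21 * M s t)),
         (c12 + (- c12 * M s s - c22 * M s t)), c21, c22.
  by move=> v; rewrite wact_cons reflE corootE E; apply/rowP => k; rewrite !mxE; ring.
exists c11, c12, (c21 + (- c11 * M t s - c21 * M t t)),
                 (c22 + (1 - c12 * M t s - c22 * M t t)).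
by move=> v; rewrite wact_cons reflE corootE E; apply/rowP => k; rewrite !mxE; ring.
Qed.

Lemma cartan2_kernel s t (p q : R) : M s t * M t s != 4 ->
  p * 2 + q * M t s = 0 -> p * M s t + q * 2 = 0 -> p = 0 /\ q = 0.
Proof.
move=> x4 e1 e2.
have /eqP : p * (4 - M s t * M t s) = 0.
  have -> : p * (4 - M s t * M t s) = 2 * (p * 2 + q * M t s) - M t s * (p * M s t + q * 2).
    by ring.
  by rewrite e1 e2 !mulr0 subr0.
rewrite mulf_eq0 subr_eq0 [4 == _]eq_sym (negPf x4) orbF => /eqP p0; split => //.
by move/eqP: e2; rewrite p0 mul0r add0r mulf_eq0 pnatr_eq0 orbF => /eqP.
Qed.

(* A word in s and t moves a vector only along alpha_s and alpha_t, by amounts linear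
   in its two coroots; when M_st M_ts <> 4 the 2x2 Cartan matrix is invertible, so the
   word is determined by its values on alpha_s and alpha_t. *)
Lemma dword_act_ext s t u1 u2 : s != t -> M s t * M t s != 4 ->
  dword s t u1 -> dword s t u2 ->
  wact u1 (al s) = wact u2 (al s) -> wact u1 (al t) = wact u2 (al t) ->
  wact u1 =1 wact u2.
Proof.
move=> st x4 /dword_actE [c11 [c12 [c21 [c22 E1]]]] /dword_actE [d11 [d12 [d21 [d22 E2]]]].
rewrite !E1 !E2 !coroot_alpha !Mdiag => es et.
have ts : t != s by rewrite eq_sym.
have coord i (a b : 'rV[R]_n) : a = b -> a 0 i = b 0 i by move->.
move: (coord s _ _ es) (coord t _ _ es) (coord s _ _ et) (coord t _ _ et).
rewrite !mxE ?alphaE /= !eqxx ?(negPf st) ?(negPf ts) /= => ess est ets ett.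
have [/subr0_eq e11 /subr0_eq e12] : c11 - d11 = 0 /\ c12 - d12 = 0.
  by apply: (cartan2_kernel x4); lra.
have [/subr0_eq e21 /subr0_eq e22] : c21 - d21 = 0 /\ c22 - d22 = 0.
  by apply: (cartan2_kernel x4); lra.
by move=> v; rewrite E1 E2 e11 e12 e21 e22.
Qed.

Lemma altw_swap_alpha s t k : (0 < k)%N ->
  (if odd k then cheb (M s t * M t s) k else M t s * cheb (M s t * M t s) k) = 0 ->
  wact (altw s t k) (al s) = wact (altw t s k) (al s).
Proof.
case: k => // k _; rewrite oddS => hk.
rewrite [altw t s _]altw_rcons wact_rcons refl_alpha // -scaleN1r wactZ.
rewrite !wact_altw_alpha // cheb_rec /=; case: (odd k) hk => /= hk.
  by rewrite mulNr -mulrA hk mulr0; apply/rowP => j; rewrite !mxE; ring.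
by rewrite hk; apply/rowP => j; rewrite !mxE; ring.
Qed.

Lemma braid s t : s != t -> (2 <= coxm M s t)%N ->
  wact (altw s t (coxm M s t)) =1 wact (altw t s (coxm M s t)).
Proof.
move=> st m2; have m0 : (0 < coxm M s t)%N by apply: ltnW.
have [annih_st annih_ts] := cheb_coxm_annih HM st m2.
have odd0 := cheb_coxm_odd HM st.
have [dw_st dw_ts] := dword_altw s t (coxm M s t).
apply: (dword_act_ext st); rewrite ?(coxm_prod_neq4 HM st m2) //.
  by apply: altw_swap_alpha => //; case: ifP.
symmetry; apply: altw_swap_alpha => //; rewrite [M t s * _]mulrC.
by case: ifP => // /odd0.
Qed.

Lemma altw_alpha_cases s t k : s != t -> (0 < k)%N -> lt_coxm M s t k ->
  exists c1 c2, wact (altw s t k) (al s) = c1 *: al s + c2 *: al t /\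
   [\/ 0 < c1 /\ 0 < c2, c1 = 1 /\ c2 = 0 | [/\ odd_adj M s t, c1 = 0 & c2 = Kc M t s]].
Proof.
move=> st k0 bd; rewrite wact_altw_alpha //.
have [bd1|bdm] := boolP (lt_coxm M s t k.+1).
  have b0 : 0 < - M t s.
    rewrite oppr_gt0 (Mts_lt0 HM st) //; apply: contraTneq bd1 => m2.
    by rewrite /lt_coxm m2 /=; lia.
  have c1 := cheb_gt0 HM st k0 bd; have c2 := cheb_gt0 HM st (ltn0Sn k) bd1.
  by case: ifP => _; do 2 eexists; (split; first reflexivity); constructor 1; rewrite mulr_gt0.
have km : k.+1 = coxm M s t by move: bd bdm; rewrite /lt_coxm; case: eqP => //= _; lia.
have m2 : (2 <= coxm M s t)%N by rewrite -km.
have [_ annih] := cheb_coxm_annih HM st m2.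
have ek : k = (coxm M s t).-1 by rewrite -km.
case om: (odd (coxm M s t)); rewrite ek (odd_predn (ltnW m2)) om (ltn_predK m2) /=;
  do 2 eexists; (split; first reflexivity).
- constructor 3; split; first by rewrite /odd_adj st om.
    by rewrite cheb_coxm_odd.
  by rewrite cheb_coxm_pred_odd.
- constructor 2; split; first by rewrite cheb_coxm_pred_even // om.
  by rewrite mulNr annih oppr0.
Qed.

Lemma altw_alpha_ge0 s t k : s != t -> lt_coxm M s t k ->
  exists c1 c2, [/\ 0 <= c1, 0 <= c2 & wact (altw s t k) (al s) = c1 *: al s + c2 *: al t].
Proof.
move=> st; case: k => [_|k bd].
  by exists 1, 0; rewrite ler01 lexx scale0r addr0 scale1r.
have [c1 [c2 [-> [[p1 p2]|[-> ->]|[oa -> ->]]]]] := altw_alpha_cases st (ltn0Sn k) bd.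
- by exists c1, c2; rewrite !ltW.
- by exists 1, 0; rewrite ler01 lexx.
- by exists 0, (Kc M t s); rewrite lexx ltW ?(Kc_gt0 HM).
Qed.

End Braid.

Section ReducedWords.
Variables (R : realType) (n : nat) (M : 'M[R]_n).
Hypothesis HM : egcm M.
Implicit Types (a i s t : 'I_n) (u w : seq 'I_n).
Local Notation al := (alpha R).
Local Notation wact := (wact M).
Let Mdiag := egcm_diag HM.

Definition reduced w := forall w', wact w =1 wact w' -> (size w <= size w')%N.

Definition dreduced s t u :=
  forall u', dword s t u' -> wact u =1 wact u' -> (size u <= size u')%N.

Definition ascent w s := forall w', wact (rcons w s) =1 wact w' -> (size w <= size w')%N.

Definition nonneg (v : 'rV[R]_n) := forall j, 0 <= v 0 j.

Lemma wact_rcons2 w s : wact (rcons (rcons w s) s) =1 wact w.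
Proof. by move=> v; rewrite !wact_rcons reflK. Qed.

Lemma wact_cons2 s w : wact [:: s, s & w] =1 wact w.
Proof. by move=> v; rewrite !wact_cons reflK. Qed.

Lemma eq_wact_cat v1 v2 u1 u2 :
  wact v1 =1 wact v2 -> wact u1 =1 wact u2 -> wact (v1 ++ u1) =1 wact (v2 ++ u2).
Proof. by move=> ev eu x; rewrite !wact_cat ev eu. Qed.

Lemma exists_reduced w : exists2 w', wact w =1 wact w' & reduced w'.
Proof.
have ex : exists k, `[< exists w', size w' = k /\ wact w =1 wact w' >].
  by exists (size w); apply/asboolP; exists w.
case: (ex_minnP ex) => k /asboolP [w' [<- ww']] kmin.
exists w' => // w'' w'w''; apply: kmin; apply/asboolP; exists w''; split => //.
exact: ftrans ww' w'w''.
Qed.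

Lemma dreduced_cons s t i u : dword s t (i :: u) -> dreduced s t (i :: u) -> dreduced s t u.
Proof.
rewrite dword_cons => /andP[hi _] Ru u' du' uu'.
have := Ru (i :: u'); rewrite dword_cons hi du' => /(_ isT).
by apply => v; rewrite !wact_cons uu'.
Qed.

Lemma dreduced_altw s t u : s != t -> dword s t u -> dreduced s t u -> last t u != s ->
  u = altw s t (size u).
Proof.
move=> st; elim: u => [//|a u IH] du Ru hl.
have [ha du'] : a \in [:: s; t] /\ dword s t u by apply/andP; rewrite -dword_cons.
have Eu : u = altw s t (size u).
  apply: IH => //; first exact: dreduced_cons du Ru.
  by case: u {du Ru du'} hl => [_|b u hl]; [rewrite eq_sym | exact: hl].
rewrite /= -Eu; congr (_ :: _); move: ha; rewrite !inE.
case: (size u) Eu => [|k] Eu.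
  by rewrite Eu /= in hl; case/orP => /eqP ea //; rewrite ea eqxx in hl.
have ah : a != if odd k then s else t.
  apply/eqP => ah; rewrite Eu /= -ah in Ru.
  have := Ru (altw s t k) (proj1 (dword_altw s t k)) (wact_cons2 _ _).
  by rewrite /= size_altw ltnNge leqnSn.
by move: ah; rewrite /=; case: (odd k) => ah /orP[]/eqP ea; rewrite ea ?eqxx in ah *.
Qed.

Lemma dihedral_ascent s t u : s != t -> dword s t u -> dreduced s t u ->
  (forall u', dword s t u' -> wact (rcons u s) =1 wact u' -> (size u <= size u')%N) ->
  u = altw s t (size u) /\ lt_coxm M s t (size u).
Proof.
move=> st du Ru Au.
have Eu : u = altw s t (size u).
  apply: dreduced_altw => //; case/lastP: u du {Ru} Au => [|u1 a] du Au.
    by rewrite eq_sym.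
  rewrite last_rcons; apply/eqP => ea; rewrite {}ea in du Au.
  have du1 : dword s t u1 by move: du; rewrite -cats1 dword_cat => /andP[].
  by have := Au u1 du1 (wact_rcons2 u1 s); rewrite size_rcons ltnn.
split => //; rewrite /lt_coxm; case: eqP => //= /eqP m0.
have m2 : (2 <= coxm M s t)%N by case: (coxm_cases HM st) m0 => [[->]|[->]|[/ltnW]].
set m := coxm M s t in m2 *.
rewrite ltnNge; apply/negP => mu.
have [p Ep] := altw_suffix s t (size u - m) m.
rewrite subnK // -Eu in Ep.
have am : altw t s m = rcons (altw s t m.-1) s by rewrite -{1}(ltn_predK m2) altw_rcons.
have short : wact (rcons u s) =1 wact (p ++ altw s t m.-1).
  by move=> v; rewrite Ep rcons_cat !wact_cat wact_rcons braid // am wact_rcons reflK.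
have := Au _ _ short; rewrite dword_cat (proj1 (dword_altw s t _)) andbT.
move: du; rewrite Ep dword_cat => /andP[-> _] /(_ isT).
have := congr1 size Ep; rewrite !size_cat !size_altw; lia.
Qed.

(* v is a minimal-length representative of the coset of [rcons w t] modulo the subgroup
   generated by s and t. *)
Lemma reduced_dihedral_split w t s : s != t ->
  reduced (rcons w t) -> ascent (rcons w t) s ->
  exists v k, [/\ (size v <= size w)%N, reduced v, ascent v s & ascent v t] /\
   [/\ wact (rcons w t) =1 wact (v ++ altw s t k), (0 < k)%N & lt_coxm M s t k].
Proof.
move=> st Rw Aw.
pose P k := `[< exists v u, [/\ size v = k, dword s t u, wact (rcons w t) =1 wact (v ++ u)
                                & (size v + size u = (size w).+1)%N] >].
have P1 : P (size w).
  apply/asboolP; exists w, [:: t]; split => //; last by rewrite addn1.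
    by rewrite dword_cons !inE eqxx orbT.
  by rewrite cats1.
case: (ex_minnP (ex_intro P _ P1)) => k /asboolP [v [u [sv du Ewvu su]]] kmin.
have svw : (size v <= size w)%N by rewrite sv kmin.
have Rv : reduced v.
  move=> v' e; rewrite leqNgt; apply/negP => lt.
  have := Rw (v' ++ u) (ftrans Ewvu (eq_wact_cat e (frefl _))).
  by rewrite size_cat size_rcons; lia.
have Ava a : a \in [:: s; t] -> ascent v a.
  move=> ha v' e; rewrite leqNgt; apply/negP => lt.
  have Ew' : wact (rcons w t) =1 wact (v' ++ a :: u).
    by apply: (ftrans Ewvu) => x; rewrite !wact_cat wact_cons -e wact_rcons reflK.
  have := Rw _ Ew'; rewrite size_cat size_rcons /= => h.
  suff /kmin : P (size v') by lia.
  by apply/asboolP; exists v', (a :: u); rewrite dword_cons ha du /=; split => //; lia.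
have Ru : dreduced s t u.
  move=> u' _ e; rewrite leqNgt; apply/negP => lt.
  have := Rw (v ++ u') (ftrans Ewvu (eq_wact_cat (frefl _) e)).
  by rewrite size_cat size_rcons; lia.
have Au u' : dword s t u' -> wact (rcons u s) =1 wact u' -> (size u <= size u')%N.
  move=> _ e; rewrite leqNgt; apply/negP => lt.
  have Ews : wact (rcons (rcons w t) s) =1 wact (v ++ u').
    by move=> x; rewrite wact_rcons Ewvu !wact_cat -e wact_rcons.
  by have := Aw _ Ews; rewrite size_cat size_rcons; lia.
have [Eu bd] := dihedral_ascent st du Ru Au.
exists v, (size u); split; split => //.
- by apply: Ava; rewrite !inE eqxx.
- by apply: Ava; rewrite !inE eqxx orbT.
- by rewrite -Eu.
- lia.
Qed.

Lemma nonneg_comb (A B : 'rV[R]_n) p q :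
  nonneg A -> nonneg B -> 0 <= p -> 0 <= q -> nonneg (p *: A + q *: B).
Proof. by move=> hA hB hp hq j; rewrite !mxE addr_ge0 ?mulr_ge0. Qed.

Lemma ascent_neq w s t : ascent (rcons w t) s -> t != s.
Proof.
move=> A; apply/eqP => ts; rewrite ts in A.
by have := A w (wact_rcons2 w s); rewrite size_rcons ltnn.
Qed.

(* Positivity of roots, as in Humphreys, Reflection groups and Coxeter groups, 5.4. *)
Lemma wact_alpha_ge0 w s : reduced w -> ascent w s -> nonneg (wact w (al s)).
Proof.
elim: {w}(size w).+1 {-2}w (ltnSn (size w)) s => // N IH w.
case/lastP: w => [_ s _ _|w1 t]; first exact: alpha_ge0.
rewrite size_rcons ltnS => sN s Rw Aw.
have st : s != t by rewrite eq_sym (ascent_neq Aw).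
have [v [k [[svw Rv Avs Avt] [Ew _ bd]]]] := reduced_dihedral_split st Rw Aw.
have [c1 [c2 [c10 c20 Eb]]] := altw_alpha_ge0 HM st bd.
have svN : (size v < N)%N by lia.
by rewrite Ew wact_cat Eb wactD !wactZ; apply: nonneg_comb => //; apply: IH.
Qed.

Lemma wact_alpha_descent w s : reduced w -> ~ ascent w s ->
  exists2 w', reduced w' /\ ascent w' s & wact w (al s) = - wact w' (al s).
Proof.
move=> Rw /existsNP [w1 /not_implyP [e /negP]]; rewrite -ltnNge => lt.
have [w' e' Rw'] := exists_reduced w1.
have Ew : wact w =1 wact (rcons w' s).
  by move=> x; rewrite wact_rcons -e' -e wact_rcons reflK.
exists w'; last by rewrite Ew wact_rcons refl_alpha // -scaleN1r wactZ scaleN1r.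
split => // w3 e3; have := Rw _ (ftrans Ew e3); have := Rw' _ (fsym e'); lia.
Qed.

Lemma ascent_of_ray w s x K : reduced w -> wact w (al s) = K *: al x -> 0 < K -> ascent w s.
Proof.
move=> Rw E K0; apply: contrapT => /(wact_alpha_descent Rw) [w' [Rw' Aw'] Ew].
have := wact_alpha_ge0 Rw' Aw' x; rewrite -[wact w' _]opprK -Ew E mxE scale_alpha_id.
by rewrite oppr_ge0 leNgt K0.
Qed.

End ReducedWords.

Section Rays.
Variables (R : realType) (n : nat) (M : 'M[R]_n).
Hypothesis HM : egcm M.
Implicit Types (i j x y z : 'I_n) (s w : seq 'I_n) (K : R).
Local Notation al := (alpha R).
Local Notation wact := (wact M).
Let Mdiag := egcm_diag HM.

Lemma alpha_eq_scale y x K : al y = K *: al x -> x = y /\ K = 1.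
Proof.
move/rowP/(_ y); rewrite scale_alphaE alphaE eqxx.
case: (eqVneq x y) => [->|xy]; first by rewrite mulr1.
by rewrite mulr0 => /eqP; rewrite oner_eq0.
Qed.

Lemma nonneg_comb_ray (A B : 'rV[R]_n) p q K x :
  nonneg A -> nonneg B -> 0 < p -> 0 < q -> p *: A + q *: B = K *: al x ->
  A = A 0 x *: al x /\ B = B 0 x *: al x.
Proof.
move=> A0 B0 p0 q0 E.
have off j : j != x -> A 0 j = 0 /\ B 0 j = 0.
  move=> jx; move/rowP/(_ j): E; rewrite scale_alphaE eq_sym (negPf jx) mulr0 !mxE.
  have := A0 j; have := B0 j; move=> b a e.
  have /eqP : p * A 0 j = 0 by nra.
  have /eqP : q * B 0 j = 0 by nra.
  by rewrite !mulf_eq0 (gt_eqF p0) (gt_eqF q0) /= => /eqP -> /eqP ->.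
split; apply/rowP => j; rewrite scale_alphaE; case: (eqVneq x j) => [->|xj].
- by rewrite mulr1.
- by rewrite mulr0 (off j _).1 // eq_sym.
- by rewrite mulr1.
- by rewrite mulr0 (off j _).2 // eq_sym.
Qed.

Lemma wact_alpha_not_parallel w y z x a b : y != z ->
  wact w (al y) = a *: al x -> wact w (al z) = b *: al x -> False.
Proof.
move=> yz Ey Ez.
have : wact w (b *: al y - a *: al z) = wact w 0.
  by rewrite wactB !wactZ Ey Ez wact0 !scalerA mulrC subrr.
move/(wact_inj Mdiag)/eqP; rewrite subr_eq0 => /eqP/rowP/(_ z).
rewrite !scale_alphaE eqxx (negPf yz) mulr0 mulr1 => a0.
by move: (wact_neq0 Mdiag w (alpha_neq0 R y)); rewrite Ey -a0 scale0r eqxx.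
Qed.

Lemma oa_path_cons x y s : oa_path M x (y :: s) = odd_adj M x y && oa_path M y s.
Proof. by []. Qed.

Lemma oa_path_cat x s1 s2 :
  oa_path M x (s1 ++ s2) = oa_path M x s1 && oa_path M (last x s1) s2.
Proof. exact: cat_path. Qed.

Lemma oa_prod_nil x : oa_prod M x [::] = 1.
Proof. by rewrite /oa_prod big_nil. Qed.

Lemma oa_prod_cons x y s : oa_prod M x (y :: s) = Kc M y x * oa_prod M y s.
Proof. by rewrite /oa_prod big_cons. Qed.

Lemma oa_prod_cat x s1 s2 :
  oa_prod M x (s1 ++ s2) = oa_prod M x s1 * oa_prod M (last x s1) s2.
Proof.
elim: s1 x => [|y s1 IH] x /=; first by rewrite oa_prod_nil mul1r.
by rewrite !oa_prod_cons IH mulrA.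
Qed.

Lemma oa_prod_gt0 x s : oa_path M x s -> 0 < oa_prod M x s.
Proof.
elim: s x => [|y s IH] x; first by rewrite oa_prod_nil ltr01.
by case/andP=> xy ys; rewrite oa_prod_cons mulr_gt0 ?IH ?(Kc_gt0 HM).
Qed.

Lemma wact_odd_adj i j : odd_adj M i j ->
  wact (altw i j (coxm M i j).-1) (al i) = Kc M j i *: al j.
Proof.
move=> oij; case/andP: (oij) => ij om; have m3 := odd_coxm_ge3 HM ij om.
rewrite wact_altw_alpha // (odd_predn (ltnW (ltnW m3))) om /= (ltn_predK (ltnW m3)).
by rewrite cheb_coxm_odd // scale0r add0r cheb_coxm_pred_odd.
Qed.

Lemma oa_path_wact x s : oa_path M x s ->
  exists w, wact w (al x) = oa_prod M x s *: al (last x s).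
Proof.
elim: s x => [|y s IH] x; first by exists [::]; rewrite oa_prod_nil scale1r.
case/andP=> xy /IH [w Ew]; exists (w ++ altw x y (coxm M x y).-1).
by rewrite wact_cat wact_odd_adj // wactZ Ew scalerA oa_prod_cons.
Qed.

Lemma reduced_ray_oa_path w y x K : reduced M w ->
  wact w (al y) = K *: al x -> 0 < K ->
  exists s, [/\ oa_path M y s, last y s = x & oa_prod M y s = K].
Proof.
elim: {w}(size w).+1 {-2}w (ltnSn (size w)) y K => // N IH w.
case/lastP: w => [_ y K _ /alpha_eq_scale [-> ->] _|w1 z].
  by exists [::]; rewrite oa_prod_nil.
rewrite size_rcons ltnS => sN y K Rw E K0.
have Aw := ascent_of_ray HM Rw E K0.
have yz : y != z by rewrite eq_sym (ascent_neq HM Aw).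
have [v [k [[svw Rv Avy Avz] [Ew k0 bd]]]] := reduced_dihedral_split HM yz Rw Aw.
have svN : (size v < N)%N by lia.
move: E; rewrite Ew wact_cat.
have [c1 [c2 [-> [[c10 c20]|[-> ->]|[oyz -> ->]]]]] := altw_alpha_cases HM yz k0 bd;
  rewrite wactD !wactZ => E.
- have [Ey Ez] := nonneg_comb_ray (wact_alpha_ge0 HM Rv Avy) (wact_alpha_ge0 HM Rv Avz)
    c10 c20 E.
  by case: (wact_alpha_not_parallel yz Ey Ez).
- by rewrite scale0r addr0 scale1r in E; apply: IH E K0.
have Kzy0 := Kc_gt0 HM oyz.
have Ez : wact v (al z) = (K / Kc M z y) *: al x.
  rewrite scale0r add0r in E.
  by rewrite [K / _]mulrC -scalerA -E scalerA mulVf ?scale1r ?gt_eqF.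
have [s [ps ls prs]] := IH v svN z _ Rv Ez (divr_gt0 K0 Kzy0).
exists (z :: s); split => //; first by rewrite oa_path_cons oyz.
by rewrite oa_prod_cons prs mulrC divfK ?gt_eqF.
Qed.

Lemma wact_ray_oa_path w y x K : wact w (al y) = K *: al x -> 0 < K ->
  exists s, [/\ oa_path M y s, last y s = x & oa_prod M y s = K].
Proof.
have [w' ew' Rw'] := exists_reduced M w.
by rewrite ew'; apply: reduced_ray_oa_path.
Qed.

Lemma wact_ray_rev w y x K : wact w (al y) = K *: al x -> K != 0 ->
  wact (rev w) (al x) = K^-1 *: al y.
Proof.
move=> E K0; have := wact_revK Mdiag w (al y).
by rewrite E wactZ => <-; rewrite scalerA mulVf ?scale1r.
Qed.

End Rays.

Section Component.
Variables (R : realType) (n : nat) (M : 'M[R]_n) (J : {set 'I_n}).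
Hypothesis HM : egcm M.
Hypothesis HJ : oa_component M J.
Implicit Types (x y z : 'I_n) (s w : seq 'I_n).
Local Notation al := (alpha R).
Local Notation conn := (oa_connected M).

Lemma oa_connected_refl x : conn x x.
Proof. by exists [::]. Qed.

Lemma oa_connected_trans x y z : conn x y -> conn y z -> conn x z.
Proof.
move=> [s1 [p1 l1]] [s2 [p2 l2]]; exists (s1 ++ s2).
by rewrite oa_path_cat last_cat l1 p1 p2.
Qed.

Lemma oa_component_closed x z : x \in J -> conn x z -> conn z x -> z \in J.
Proof.
case: HJ => _ pw Jmax xJ cxz czx.
have pw' : oa_pairwise M (z |: J).
  move=> a b; rewrite !finset.in_setU1 => /orP[/eqP ->|aJ] /orP[/eqP ->|bJ].
  - exact: oa_connected_refl.
  - exact: oa_connected_trans czx (pw _ _ xJ bJ).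
  - exact: oa_connected_trans (pw _ _ aJ xJ) cxz.
  - exact: pw.
by rewrite -(Jmax _ (finset.subsetUr _ _) pw') finset.setU11.
Qed.

Lemma oa_path_connected y s z : oa_path M y s -> z \in y :: s ->
  conn y z /\ conn z (last y s).
Proof.
elim: s y => [|a s IH] y.
  by move=> _; rewrite mem_seq1 => /eqP ->; split; exact: oa_connected_refl.
rewrite oa_path_cons => /andP[ya ps]; rewrite in_cons => /orP[/eqP ->|/(IH _ ps) [h1 h2]].
  by split; [exact: oa_connected_refl | exists (a :: s); rewrite oa_path_cons ya ps].
split => //; apply: oa_connected_trans h1.
by exists [:: a]; rewrite oa_path_cons ya.
Qed.

Lemma oa_path_sub y s : y \in J -> last y s \in J -> oa_path M y s -> all (mem J) (y :: s).
Proof.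
case: HJ => _ pw _ yJ xJ ps; apply/allP => z /(oa_path_connected ps) [yz zx].
exact: oa_component_closed xJ (oa_connected_trans (pw _ _ xJ yJ) yz) zx.
Qed.

Lemma ray_rootsP x v : ray_roots M x v ->
  exists2 K, 0 < K & v = K *: al x /\ exists w y, wact M w (al y) = v.
Proof.
move=> [[K _ <-] [[w [y Ev]] pv]].
have : K *: al x != 0 by rewrite Ev; apply/wact_neq0/alpha_neq0/egcm_diag.
have := pv x; rewrite scale_alpha_id le_eqVlt => /orP[/eqP <-|K0].
  by rewrite scale0r eqxx.
by exists K => //; split => //; exists w, y.
Qed.

Section Unital.
Hypothesis U : unital_oa_cyclic M J.

Lemma oa_prod_path_indep y x s1 s2 : y \in J -> x \in J ->
  oa_path M y s1 -> last y s1 = x -> oa_path M y s2 -> last y s2 = x ->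
  oa_prod M y s1 = oa_prod M y s2.
Proof.
case: HJ => _ pw _ yJ xJ p1 l1 p2 l2.
have [q [pq lq]] := pw _ _ xJ yJ.
have cyc s : oa_path M y s -> last y s = x -> oa_prod M y s * oa_prod M x q = 1.
  move=> ps ls; have psq : oa_path M y (s ++ q) by rewrite oa_path_cat ls ps pq.
  have lsq : last y (s ++ q) = y by rewrite last_cat ls lq.
  by rewrite -ls -oa_prod_cat U // oa_path_sub // lsq.
by apply: (mulIf (lt0r_neq0 (oa_prod_gt0 HM pq))); rewrite !cyc.
Qed.

(* The product of any OA-path from y to x (junk value 0 if there is none). *)
Definition oa_weight y x : R :=
  if pselect (conn y x) is left h then oa_prod M y (projT1 (cid h)) else 0.

Lemma oa_weightE y x s : y \in J -> x \in J -> oa_path M y s -> last y s = x ->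
  oa_weight y x = oa_prod M y s.
Proof.
move=> yJ xJ ps ls; rewrite /oa_weight; case: pselect => [h|nc]; last by case: nc; exists s.
by case: (cid h) => s' [ps' ls'] /=; apply: (oa_prod_path_indep yJ xJ).
Qed.

Lemma ray_rootsE x : x \in J ->
  ray_roots M x = (fun y => oa_weight y x *: al x) @` [set y | y \in J].
Proof.
move=> xJ; case: (HJ) => _ pw _; apply/seteqP; split => v.
  case/ray_rootsP => K K0 [-> [w [y Ew]]].
  have [s [ps ls <-]] := wact_ray_oa_path HM Ew K0.
  have K0' : 0 < K^-1 by rewrite invr_gt0.
  have [s' [ps' ls' _]] := wact_ray_oa_path HM (wact_ray_rev HM Ew (lt0r_neq0 K0)) K0'.
  have yJ : y \in J by apply: (oa_component_closed xJ); [exists s' | exists s].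
  by exists y => //; rewrite (oa_weightE yJ xJ ps ls).
move=> [y yJ <-]; have [s [ps ls]] := pw _ _ yJ xJ.
have [w Ew] := oa_path_wact HM ps; rewrite ls in Ew.
have s0 := oa_prod_gt0 HM ps; rewrite (oa_weightE yJ xJ ps ls).
split; first by exists (oa_prod M y s).
split; first by exists w, y.
by move=> j; rewrite scale_alphaE mulr_ge0 ?ler0n ?ltW.
Qed.

Lemma ray_roots_finite x : x \in J -> finite_set (ray_roots M x).
Proof. by move=> xJ; rewrite ray_rootsE //; apply/finite_image/finite_finset. Qed.

Lemma oa_weight_gt0 y x : y \in J -> x \in J -> 0 < oa_weight y x.
Proof.
case: (HJ) => _ pw _ yJ xJ; have [s [ps ls]] := pw _ _ yJ xJ.
by rewrite (oa_weightE yJ xJ ps ls) oa_prod_gt0.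
Qed.

Lemma oa_weight_mul y x z : y \in J -> x \in J -> z \in J ->
  oa_weight y z = oa_weight y x * oa_weight x z.
Proof.
case: (HJ) => _ pw _ yJ xJ zJ.
have [s1 [p1 l1]] := pw _ _ yJ xJ; have [s2 [p2 l2]] := pw _ _ xJ zJ.
rewrite (oa_weightE yJ xJ p1 l1) (oa_weightE xJ zJ p2 l2) -l1 -oa_prod_cat.
by apply: oa_weightE => //; rewrite ?oa_path_cat ?last_cat l1 ?p1 ?p2.
Qed.

Lemma ray_roots_card x x' : x \in J -> x' \in J ->
  (ray_roots M x #= ray_roots M x')%card.
Proof.
move=> xJ x'J; pose g (v : 'rV[R]_n) := (oa_weight x x' * v 0 x) *: al x'.
have -> : ray_roots M x' = g @` ray_roots M x.
  rewrite !ray_rootsE // image_comp; apply: eq_imagel => y yJ.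
  by rewrite /g /= scale_alpha_id (oa_weight_mul yJ xJ x'J) mulrC.
apply/card_esym/inj_card_eq => v1 v2; rewrite !inE.
move=> /ray_rootsP [K1 _ [E1 _]] /ray_rootsP [K2 _ [E2 _]].
rewrite /g E1 E2 !scale_alpha_id => /(congr1 (fun v : 'rV[R]_n => v 0 x')).
by rewrite !scale_alpha_id => /(mulfI (lt0r_neq0 (oa_weight_gt0 xJ x'J))) ->.
Qed.

End Unital.

Lemma ray_roots_infinite x : x \in J -> ~ unital_oa_cyclic M J ->
  ~ finite_set (ray_roots M x).
Proof.
move=> xJ nU fin; apply: nU => x0 s ps ls sJ; apply: contrapT => c1.
case: (HJ) => _ pw _; have x0J : x0 \in J by case/andP: sJ.
have [p [pp lp]] := pw _ _ x0J xJ.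
have [Wc Ec] := oa_path_wact HM ps; rewrite ls in Ec.
have [Wp Ep] := oa_path_wact HM pp; rewrite lp in Ep.
set c := oa_prod M x0 s in Ec c1; set d := oa_prod M x0 p in Ep.
have c0 : 0 < c := oa_prod_gt0 HM ps; have d0 : 0 < d := oa_prod_gt0 HM pp.
have Epow k : wact M (flatten (nseq k Wc)) (al x0) = c ^+ k *: al x0.
  elim: k => [|k IH]; first by rewrite expr0 scale1r.
  by rewrite /= wact_cat IH wactZ Ec scalerA -exprSr.
pose F k := (d * c ^+ k) *: al x.
have Fray k : ray_roots M x (F k).
  split; first by exists (d * c ^+ k).
  split; last by move=> j; rewrite scale_alphaE mulr_ge0 ?ler0n // ltW // mulr_gt0 ?exprn_gt0.
  exists (Wp ++ flatten (nseq k Wc)), x0.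
  change (F k = wact M (Wp ++ flatten (nseq k Wc)) (al x0)).
  by rewrite wact_cat Epow wactZ Ep scalerA mulrC.
have Finj : {in [set: nat] &, injective F}.
  move=> i j _ _ /(congr1 (fun v : 'rV[R]_n => v 0 x)); rewrite !scale_alpha_id.
  by move/(mulfI (lt0r_neq0 d0)); apply: ieexprIn => //; apply/eqP.
apply: infinite_nat; rewrite -(eq_finite_set (inj_card_eq Finj)).
by apply: sub_finite_set fin => v [k _ <-].
Qed.

End Component.

Theorem proposition4p8 (R : realType) (n : nat) (M : 'M[R]_n) (J : {set 'I_n}) :
  egcm M -> oa_component M J ->
  [/\ (unital_oa_cyclic M J <-> exists2 x, x \in J & finite_set (ray_roots M x)),
      (unital_oa_cyclic M J <-> forall x, x \in J -> finite_set (ray_roots M x))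
    & (unital_oa_cyclic M J ->
       forall x y, x \in J -> y \in J -> (ray_roots M x #= ray_roots M y)%card)].
Proof.
move=> HM HJ; have [x0 x0J] : exists x, x \in J by case: (HJ) => /set0Pn.
have finite_unital x : x \in J -> finite_set (ray_roots M x) -> unital_oa_cyclic M J.
  by move=> xJ fin; apply: contrapT => /(ray_roots_infinite HM HJ xJ).
split; last exact: ray_roots_card.
- split => [U|[x]]; last exact: finite_unital.
  by exists x0; last exact: ray_roots_finite HM HJ U x0 x0J.
- split => [U x|fin]; first exact: ray_roots_finite.
  exact: finite_unital x0J (fin _ x0J).
Qed.
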